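(* Let $0<\underline\theta\le\bar\theta<\infty$. There exists a constant $C>0$ depending only on $\nu,\underline\theta,\bar\theta$ such that for all $\delta\in(0,1]$, all $\theta\in[\underline\theta,\bar\theta]$ and all $\lambda\in[-\pi,\pi]$: $$C^{-1}\delta^{2\nu}\le g^*_{\nu,\delta\theta}(\lambda)\le g^\delta_{\nu,\theta}(\lambda)\le g^*_{\nu,\delta\theta}(\lambda)+C\delta^{2\nu},$$ and $$g^*_{\nu,\delta\theta}(\lambda)\,\big|h^\delta_{\nu,\theta}(\lambda)-\delta\,h^*_{\nu,\delta\theta}(\lambda)\big|\le C\delta^{2\nu}.$$
   Context: Fix $\nu\ge1/2$. For $\alpha>0$, $\omega\in\mathbb R$ let $g^*_{\nu,\alpha}(\omega)=C_\nu\alpha^{2\nu}(\alpha^2+\omega^2)^{-(\nu+1/2)}$ with $C_\nu=\Gamma(\nu+\frac12)/(\sqrt\pi\,\Gamma(\nu))$, and $h^*_{\nu,\alpha}=\partial\log g^*_{\nu,\alpha}/\partial\alpha$. For $\delta,\theta>0$ and $\lambda\in[-\pi,\pi]$ let $g^\delta_{\nu,\theta}(\lambda)=\sum_{k\in\mathbb Z}g^*_{\nu,\delta\theta}(\lambda+2k\pi)$ and $h^\delta_{\nu,\theta}=\partial\log g^\delta_{\nu,\theta}/\partial\theta$. *)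

From Stdlib Require Import Reals Lra ZArith ClassicalEpsilon.
Open Scope R_scope.

Fixpoint poch (x : R) (n : nat) : R :=
  match n with
  | O => x
  | S m => poch x m * (x + INR (S m))
  end.

(* Euler's Gamma function via Gauss' limit formula (valid for x > 0):
   Gamma x = lim_n n! n^x / (x (x+1) ... (x+n)). *)
Definition Gamma (x : R) : R :=
  epsilon (inhabits 0)
    (fun l => Un_cv (fun n => INR (fact n) * Rpower (INR n) x / poch x n) l).

Definition Cnu (nu : R) : R := Gamma (nu + /2) / (sqrt PI * Gamma nu).

Definition gstar (nu alpha omega : R) : R :=
  Cnu nu * Rpower alpha (2 * nu) * Rpower (alpha ^ 2 + omega ^ 2) (- (nu + /2)).

Definition hstar (nu alpha omega : R) : R :=
  epsilon (inhabits 0)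
    (fun l => derivable_pt_lim (fun a => ln (gstar nu a omega)) alpha l).

(* symmetric partial sums sum_{k=-N}^{N} g*_{nu,delta theta}(lambda + 2 k pi) *)
Definition gdelta_partial (nu delta theta lambda : R) (N : nat) : R :=
  sum_f_R0 (fun i => gstar nu (delta * theta)
              (lambda + 2 * IZR (Z.of_nat i - Z.of_nat N) * PI)) (2 * N).

(* g^delta_{nu,theta}(lambda) = sum_{k in Z} g*_{nu,delta theta}(lambda + 2 k pi)
   (series of positive terms, computed as limit of symmetric partial sums) *)
Definition gdelta (nu delta theta lambda : R) : R :=
  epsilon (inhabits 0) (fun l => Un_cv (gdelta_partial nu delta theta lambda) l).

Definition hdelta (nu delta theta lambda : R) : R :=
  epsilon (inhabits 0)
    (fun l => derivable_pt_lim (fun t => ln (gdelta nu delta t lambda)) theta l).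

From Stdlib Require Import Reals Lra Lia ClassicalEpsilon ZArith.
From Coquelicot Require Import Coquelicot.
Open Scope R_scope.

(* Write a = delta theta.  The periodized density g^delta_{nu,theta}(lambda) is the
   sum over k of the aliases g*_{nu,a}(lambda + 2 k pi).  For k <> 0 and
   |lambda| <= pi the alias frequency is at least 2|k| in modulus, so (nu >= 1/2)
   the k-th alias is at most C_nu a^{2 nu} / (2 |k| (|k|+1)).  Grouping k and -k,
   the series is dominated by C_nu a^{2 nu} times the telescoping weights
   1/(j(j+1)); this gives convergence and g* <= g^delta <= g* + C_nu a^{2 nu}.
   The theta-derivatives of the aliases carry an extra factor a h*_{nu,a}, which
   is bounded by 4 nu + 1, so the differentiated series converges uniformly near
   theta and g^delta may be differentiated term by term.  Subtracting
   delta h*_{nu,a}(lambda) g^delta leaves a series whose central term vanishes and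
   whose other terms carry the factor a (h*(w) - h*(lambda)), bounded by 2 nu + 1;
   dividing by g^delta >= g* yields the estimate on h^delta. *)

(** * Positivity of Gamma *)

Lemma exp_monotone x y : x <= y -> exp x <= exp y.
Proof. intros [H|H]; [left; now apply exp_increasing | subst; lra]. Qed.

Lemma ln_le_pred y : 0 < y -> ln y <= y - 1.
Proof. intros Hy. pose proof (exp_ineq1_le (ln y)). rewrite exp_ln in H; lra. Qed.

Lemma ln_succ_bounds (n : R) : 1 <= n -> / (n + 1) <= ln (n + 1) - ln n <= / n.
Proof.
  intros Hn. split.
  - assert (H := ln_le_pred (n / (n + 1)) ltac:(apply Rdiv_lt_0_compat; lra)).
    unfold Rdiv in H. rewrite ln_mult, ln_Rinv in H by (try apply Rinv_0_lt_compat; lra).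
    replace (n * / (n + 1) - 1) with (- / (n + 1)) in H by (field; lra). lra.
  - assert (H := ln_le_pred ((n + 1) / n) ltac:(apply Rdiv_lt_0_compat; lra)).
    unfold Rdiv in H. rewrite ln_mult, ln_Rinv in H by (try apply Rinv_0_lt_compat; lra).
    replace ((n + 1) * / n - 1) with (/ n) in H by (field; lra). lra.
Qed.

Lemma poch_pos x n : 0 < x -> 0 < poch x n.
Proof.
  intros Hx; induction n as [|n IH]; [exact Hx|].
  apply Rmult_lt_0_compat; [exact IH|]. pose proof (pos_INR (S n)); lra.
Qed.

Definition gauss_seq (x : R) (n : nat) : R := INR (fact n) * Rpower (INR n) x / poch x n.

Definition gauss_ratio (x : R) (n : nat) : R :=
  INR (S n) / (x + INR (S n)) * exp (x * (ln (INR (S n)) - ln (INR n))).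

Lemma gauss_seq_S x n : 0 < x -> gauss_seq x (S n) = gauss_seq x n * gauss_ratio x n.
Proof.
  intros Hx. unfold gauss_seq, gauss_ratio, Rpower.
  replace (x * ln (INR (S n))) with (x * ln (INR n) + x * (ln (INR (S n)) - ln (INR n))) by ring.
  rewrite exp_plus. change (fact (S n)) with (S n * fact n)%nat. rewrite mult_INR.
  change (poch x (S n)) with (poch x n * (x + INR (S n))).
  pose proof (poch_pos x n Hx). pose proof (pos_INR (S n)).
  field. split; lra.
Qed.

(* For n >= 1 the ratio lies in [1, exp (x (1+x) (1/n - 1/(n+1)))]: the Gauss
   sequence increases, and the increments have a summable logarithm. *)
Lemma gauss_ratio_bounds x n : 0 < x -> (1 <= n)%nat ->
  1 <= gauss_ratio x n <= exp (x * (1 + x) * (/ INR n - / INR (S n))).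
Proof.
  intros Hx Hn. unfold gauss_ratio. rewrite S_INR.
  assert (Hn1 : 1 <= INR n) by (apply (le_INR 1); lia).
  destruct (ln_succ_bounds (INR n) Hn1) as [Hlo Hhi].
  set (D := ln (INR n + 1) - ln (INR n)) in *.
  split.
  - pose proof (exp_ineq1_le (x * D)).
    assert (x * / (INR n + 1) <= x * D) by (apply Rmult_le_compat_l; lra).
    apply Rle_trans with ((INR n + 1) / (x + (INR n + 1)) * (1 + x * / (INR n + 1))).
    + right. field. lra.
    + apply Rmult_le_compat_l; [apply Rlt_le, Rdiv_lt_0_compat|]; lra.
  - assert (Hfrac : (INR n + 1) / (x + (INR n + 1)) <= exp (- (x / (INR n + 1 + x)))).
    { pose proof (exp_ineq1_le (- (x / (INR n + 1 + x)))).
      replace ((INR n + 1) / (x + (INR n + 1))) with (1 + - (x / (INR n + 1 + x))) by (field; lra).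
      lra. }
    apply Rle_trans with (exp (- (x / (INR n + 1 + x))) * exp (x * / INR n)).
    + apply Rmult_le_compat; try lra.
      * apply Rlt_le, Rdiv_lt_0_compat; lra.
      * left; apply exp_pos.
      * apply exp_monotone, Rmult_le_compat_l; lra.
    + rewrite <- exp_plus. apply exp_monotone.
      assert (0 <= x * (1 + x) * x / (INR n * (INR n + 1) * (INR n + 1 + x))).
      { apply Rlt_le, Rdiv_lt_0_compat; [|repeat apply Rmult_lt_0_compat]; nra. }
      replace (x * (1 + x) * (/ INR n - / (INR n + 1)))
        with (- (x / (INR n + 1 + x)) + x * / INR n
              + x * (1 + x) * x / (INR n * (INR n + 1) * (INR n + 1 + x))) by (field; lra).
      lra.
Qed.

Lemma gauss_seq_pos x n : 0 < x -> (1 <= n)%nat -> 0 < gauss_seq x n.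
Proof.
  intros Hx Hn. unfold gauss_seq, Rpower. apply Rdiv_lt_0_compat; [|now apply poch_pos].
  apply Rmult_lt_0_compat; [apply lt_0_INR, lt_O_fact | apply exp_pos].
Qed.

(* From index 1 on, the Gauss sequence is increasing and bounded, so its limit
   Gamma x exceeds its (positive) first term. *)
Lemma Gamma_pos x : 0 < x -> 0 < Gamma x.
Proof.
  intros Hx. set (b n := gauss_seq x (S n)).
  assert (Hb : forall n, b (S n) = b n * gauss_ratio x (S n))
    by (intro n; apply gauss_seq_S, Hx).
  assert (Hbpos : forall n, 0 < b n) by (intro n; apply gauss_seq_pos; [exact Hx | lia]).
  assert (Hgrow : Un_growing b).
  { intro n. rewrite Hb. destruct (gauss_ratio_bounds x (S n) Hx ltac:(lia)) as [Hr _].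
    rewrite <- (Rmult_1_r (b n)) at 1. apply Rmult_le_compat_l; [left; apply Hbpos | exact Hr]. }
  assert (Hbound : forall n, b n <= b 0%nat * exp (x * (1 + x) * (1 - / INR (S n)))).
  { induction n as [|n IH].
    - simpl. rewrite Rinv_1, Rminus_diag, Rmult_0_r, exp_0. lra.
    - rewrite Hb. destruct (gauss_ratio_bounds x (S n) Hx ltac:(lia)) as [Hr1 Hr].
      pose proof (Hbpos n).
      eapply Rle_trans; [apply Rmult_le_compat; [lra | lra | exact IH | exact Hr]|].
      rewrite Rmult_assoc, <- exp_plus. right. f_equal. f_equal. ring. }
  assert (Hub : has_ub b).
  { exists (b 0%nat * exp (x * (1 + x))). intros y [n ->].
    eapply Rle_trans; [apply Hbound|]. apply Rmult_le_compat_l; [left; apply Hbpos|].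
    apply exp_monotone. assert (0 < / INR (S n)) by (apply Rinv_0_lt_compat, lt_0_INR; lia).
    assert (0 < x * (1 + x)) by nra. nra. }
  destruct (growing_cv b Hgrow Hub) as [l Hl].
  assert (Hgauss : Un_cv (gauss_seq x) l).
  { apply (CV_shift _ 1), (Un_cv_ext b); [intro n; now rewrite Nat.add_1_r | exact Hl]. }
  assert (HG : Gamma x = l).
  { apply (UL_sequence (gauss_seq x)); [|exact Hgauss].
    unfold Gamma. apply epsilon_spec. exists l. exact Hgauss. }
  rewrite HG. pose proof (growing_ineq b l Hgrow Hl 0). pose proof (Hbpos 0%nat). lra.
Qed.

Lemma Cnu_pos nu : 0 < nu -> 0 < Cnu nu.
Proof.
  intros Hnu. unfold Cnu. apply Rdiv_lt_0_compat; [apply Gamma_pos; lra|].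
  apply Rmult_lt_0_compat; [apply sqrt_lt_R0, PI_RGT_0 | now apply Gamma_pos].
Qed.

(** * Series dominated by a telescoping sequence *)

(* 1/(j(j+1)) = 1/j - 1/(j+1): a series whose terms of index j >= 1 are bounded
   by K times this weight has tails of size at most K/(n+1). *)
Definition tel_weight (j : nat) : R := / (INR j * INR (S j)).

Lemma tel_weight_pos j : (1 <= j)%nat -> 0 < tel_weight j.
Proof.
  intros Hj. unfold tel_weight.
  apply Rinv_0_lt_compat, Rmult_lt_0_compat; apply lt_0_INR; lia.
Qed.

Section TelescopingTail.

Variables (u : nat -> R) (K : R).
Hypothesis K_nonneg : 0 <= K.
Hypothesis u_dominated : forall j, (1 <= j)%nat -> Rabs (u j) <= K * tel_weight j.

Lemma partial_sum_increment n p :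
  Rabs (sum_f_R0 u (n + p) - sum_f_R0 u n) <= K * (/ INR (S n) - / INR (S (n + p))).
Proof.
  induction p as [|p IH].
  - rewrite Nat.add_0_r, !Rminus_diag, Rabs_R0, Rmult_0_r. lra.
  - rewrite Nat.add_succ_r, tech5.
    replace (sum_f_R0 u (n + p) + u (S (n + p)) - sum_f_R0 u n)
      with ((sum_f_R0 u (n + p) - sum_f_R0 u n) + u (S (n + p))) by ring.
    pose proof (u_dominated (S (n + p)) ltac:(lia)).
    replace (K * (/ INR (S n) - / INR (S (S (n + p)))))
      with (K * (/ INR (S n) - / INR (S (n + p))) + K * tel_weight (S (n + p))).
    + eapply Rle_trans; [apply Rabs_triang | lra].
    + unfold tel_weight. rewrite !S_INR. pose proof (pos_INR (n + p)). pose proof (pos_INR n).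
      field. lra.
Qed.

Lemma partial_sum_tail n m : (n <= m)%nat ->
  Rabs (sum_f_R0 u m - sum_f_R0 u n) <= K / INR (S n).
Proof.
  intros Hnm. replace m with (n + (m - n))%nat by lia.
  eapply Rle_trans; [apply partial_sum_increment|].
  assert (0 < / INR (S (n + (m - n)))) by (apply Rinv_0_lt_compat, lt_0_INR; lia).
  unfold Rdiv. apply Rmult_le_compat_l; lra.
Qed.

Lemma partial_sum_head m : Rabs (sum_f_R0 u m - u 0%nat) <= K.
Proof.
  pose proof (partial_sum_tail 0 m ltac:(lia)) as H. simpl sum_f_R0 at 2 in H.
  replace (K / INR 1) with K in H by (simpl; field). exact H.
Qed.

End TelescopingTail.

Lemma tail_eventually_small K eps : 0 < eps ->
  exists N, forall n, (N <= n)%nat -> K / INR (S n) < eps.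
Proof.
  intros Heps. pose proof (Rabs_pos K). pose proof (RRle_abs K).
  destruct (archimed_cor1 (eps / (Rabs K + 1))) as [N [HN HN0]];
    [apply Rdiv_lt_0_compat; lra|].
  exists N. intros n Hn.
  assert (HNpos : 0 < INR N) by (apply lt_0_INR; lia).
  assert (Hinv : / INR (S n) <= / INR N) by (apply Rinv_le_contravar; [lra | apply le_INR; lia]).
  assert (0 < / INR (S n)) by (apply Rinv_0_lt_compat, lt_0_INR; lia).
  apply Rle_lt_trans with ((Rabs K + 1) * / INR N).
  - unfold Rdiv. apply Rle_trans with (Rabs K * / INR (S n)).
    + apply Rmult_le_compat_r; lra.
    + apply Rmult_le_compat; lra.
  - apply (Rmult_lt_reg_l (/ (Rabs K + 1))); [apply Rinv_0_lt_compat; lra|].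
    rewrite <- Rmult_assoc, Rinv_l, Rmult_1_l by lra. unfold Rdiv in HN. lra.
Qed.

Lemma dominated_series_cv (u : nat -> R) K : 0 <= K ->
  (forall j, (1 <= j)%nat -> Rabs (u j) <= K * tel_weight j) ->
  exists l, Un_cv (fun n => sum_f_R0 u n) l.
Proof.
  intros HK Hu.
  assert (Hcauchy : Cauchy_crit (fun n => sum_f_R0 u n)).
  { intros eps Heps. destruct (tail_eventually_small K eps Heps) as [N HN].
    exists N. intros n m Hn Hm. unfold Rdist.
    destruct (Nat.le_ge_cases n m) as [H|H].
    - rewrite Rabs_minus_sym. eapply Rle_lt_trans; [apply (partial_sum_tail u K HK Hu n m H)|].
      apply HN, Hn.
    - eapply Rle_lt_trans; [apply (partial_sum_tail u K HK Hu m n H)|]. apply HN, Hm. }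
  destruct (Rcomplete.R_complete _ Hcauchy) as [l Hl]. now exists l.
Qed.

Lemma dominated_series_cvu (fn : nat -> R -> R) (g : R -> R) c (r : posreal) K : 0 <= K ->
  (forall j y, (1 <= j)%nat -> Boule c r y -> Rabs (fn j y) <= K * tel_weight j) ->
  (forall y, Boule c r y -> Un_cv (fun N => sum_f_R0 (fun j => fn j y) N) (g y)) ->
  CVU (fun N y => sum_f_R0 (fun j => fn j y) N) g c r.
Proof.
  intros HK Hb Hcv eps Heps.
  destruct (tail_eventually_small K (eps / 2) ltac:(lra)) as [N HN]. exists N.
  intros n y Hn Hy. destruct (Hcv y Hy (eps / 2) ltac:(lra)) as [M HM].
  set (m := Nat.max n M).
  assert (Hlim := HM m ltac:(unfold m; lia)). unfold Rdist in Hlim.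
  assert (Htail := partial_sum_tail (fun j => fn j y) K HK (fun j Hj => Hb j y Hj Hy) n m
                     ltac:(unfold m; lia)).
  assert (Hsmall := HN n Hn).
  replace (g y - sum_f_R0 (fun j => fn j y) n) with
    ((sum_f_R0 (fun j => fn j y) m - sum_f_R0 (fun j => fn j y) n)
     - (sum_f_R0 (fun j => fn j y) m - g y)) by ring.
  eapply Rle_lt_trans; [apply Rabs_triang|]. rewrite Rabs_Ropp. lra.
Qed.

Lemma cv_const c : Un_cv (fun _ => c) c.
Proof. intros eps Heps. exists 0%nat. intros. unfold Rdist. rewrite Rminus_diag, Rabs_R0. exact Heps. Qed.

Lemma limit_between (u : nat -> R) l a b : Un_cv u l -> (forall n, a <= u n <= b) -> a <= l <= b.
Proof.
  intros Hu Hab. split.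
  - apply (Rle_cv_lim (Un := fun _ => a) (Vn := u)); [intro n; apply Hab | apply cv_const | exact Hu].
  - apply (Rle_cv_lim (Un := u) (Vn := fun _ => b)); [intro n; apply Hab | exact Hu | apply cv_const].
Qed.

Lemma limit_abs_le (u : nat -> R) l B : Un_cv u l -> (forall n, Rabs (u n) <= B) -> Rabs l <= B.
Proof.
  intros Hu HB. apply (Rle_cv_lim (Un := fun n => Rabs (u n)) (Vn := fun _ => B)); [exact HB | | apply cv_const].
  now apply cv_cvabs.
Qed.

Definition series_sum (u : nat -> R) : R :=
  epsilon (inhabits 0) (fun l => Un_cv (fun N => sum_f_R0 u N) l).

Lemma series_sum_spec u : (exists l, Un_cv (fun N => sum_f_R0 u N) l) ->
  Un_cv (fun N => sum_f_R0 u N) (series_sum u).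
Proof. intros H. unfold series_sum. now apply epsilon_spec. Qed.

(** * The Matérn spectral density *)

Lemma Rpower_pos a p : 0 < Rpower a p.
Proof. apply exp_pos. Qed.

Definition log_gstar (nu a w : R) : R :=
  ln (Cnu nu) + 2 * nu * ln a - (nu + /2) * ln (a ^ 2 + w ^ 2).

(* The logarithmic derivative of a |-> g*_{nu,a}(w), i.e. h*_{nu,a}(w). *)
Definition score (nu a w : R) : R := 2 * nu / a - (2 * nu + 1) * a / (a ^ 2 + w ^ 2).

Lemma gstar_exp nu a w : 0 < Cnu nu -> gstar nu a w = exp (log_gstar nu a w).
Proof.
  intros Hc. unfold gstar, log_gstar, Rpower, Rminus.
  rewrite !exp_plus, exp_ln by exact Hc. repeat f_equal; ring.
Qed.

Lemma gstar_pos nu a w : 0 < Cnu nu -> 0 < gstar nu a w.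
Proof. intros Hc. rewrite gstar_exp by exact Hc. apply exp_pos. Qed.

Lemma log_gstar_deriv nu a w : 0 < a ->
  derivable_pt_lim (fun a => log_gstar nu a w) a (score nu a w).
Proof.
  intros Ha. apply is_derive_Reals. unfold log_gstar. auto_derive.
  - repeat split; nra.
  - unfold score. assert (0 < a ^ 2 + w ^ 2) by nra. field. lra.
Qed.

Lemma gstar_deriv nu a w : 0 < Cnu nu -> 0 < a ->
  derivable_pt_lim (fun a => gstar nu a w) a (gstar nu a w * score nu a w).
Proof.
  intros Hc Ha. apply is_derive_Reals.
  apply (is_derive_ext (fun a => exp (log_gstar nu a w))); [intro b; now rewrite gstar_exp|].
  rewrite gstar_exp, Rmult_comm by exact Hc.
  apply (is_derive_comp exp); [apply is_derive_Reals, derivable_pt_lim_exp|].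
  now apply is_derive_Reals, log_gstar_deriv.
Qed.

Lemma gstar_scaled_deriv nu d w t : 0 < Cnu nu -> 0 < d -> 0 < t ->
  derivable_pt_lim (fun t => gstar nu (d * t) w) t
    (gstar nu (d * t) w * (d * score nu (d * t) w)).
Proof.
  intros Hc Hd Ht. apply is_derive_Reals.
  replace (gstar nu (d * t) w * (d * score nu (d * t) w))
    with (d * (gstar nu (d * t) w * score nu (d * t) w)) by ring.
  apply (is_derive_comp (fun a => gstar nu a w) (fun t => d * t)).
  - apply is_derive_Reals, gstar_deriv; [exact Hc | nra].
  - auto_derive; [exact I | ring].
Qed.

Lemma log_derivative_value (f : R -> R) x l : 0 < f x -> derivable_pt_lim f x l ->
  epsilon (inhabits 0) (fun l' => derivable_pt_lim (fun y => ln (f y)) x l') = l / f x.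
Proof.
  intros Hpos Hf.
  assert (Hln : derivable_pt_lim (fun y => ln (f y)) x (l / f x)).
  { apply is_derive_Reals. replace (l / f x) with (l * / f x) by reflexivity.
    apply (is_derive_comp ln f); [apply is_derive_Reals, derivable_pt_lim_ln, Hpos|].
    now apply is_derive_Reals. }
  apply (uniqueness_limite (fun y => ln (f y)) x); [|exact Hln].
  apply epsilon_spec. exists (l / f x). exact Hln.
Qed.

Lemma hstar_eq_score nu a w : 0 < Cnu nu -> 0 < a -> hstar nu a w = score nu a w.
Proof.
  intros Hc Ha. unfold hstar.
  rewrite (log_derivative_value (fun a => gstar nu a w) a _ (gstar_pos nu a w Hc)
             (gstar_deriv nu a w Hc Ha)).
  pose proof (gstar_pos nu a w Hc). field. lra.
Qed.

(* a h*_{nu,a}(w) = 2 nu - (2 nu + 1) r with r = a^2/(a^2+w^2) in (0,1]: the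
   rescaled score is bounded, uniformly in w. *)
Lemma scaled_score_eq nu a w : 0 < a ->
  a * score nu a w = 2 * nu - (2 * nu + 1) * (a ^ 2 / (a ^ 2 + w ^ 2)).
Proof. intros Ha. unfold score. assert (0 < a ^ 2 + w ^ 2) by nra. field. lra. Qed.

Lemma sq_ratio_bounds a w : 0 < a -> 0 <= a ^ 2 / (a ^ 2 + w ^ 2) <= 1.
Proof.
  intros Ha. assert (0 < a ^ 2) by nra. assert (0 <= w ^ 2) by nra. split.
  - apply Rlt_le, Rdiv_lt_0_compat; lra.
  - apply Rmult_le_reg_r with (a ^ 2 + w ^ 2); [lra|].
    unfold Rdiv. rewrite Rmult_assoc, Rinv_l by lra. lra.
Qed.

Lemma scaled_score_abs nu a w : 0 <= nu -> 0 < a -> Rabs (a * score nu a w) <= 4 * nu + 1.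
Proof.
  intros Hnu Ha. rewrite scaled_score_eq by exact Ha.
  pose proof (sq_ratio_bounds a w Ha). apply Rabs_le. split; nra.
Qed.

Lemma scaled_score_diff nu a w1 w2 : 0 <= nu -> 0 < a ->
  Rabs (a * (score nu a w1 - score nu a w2)) <= 2 * nu + 1.
Proof.
  intros Hnu Ha. rewrite Rmult_minus_distr_l, !scaled_score_eq by exact Ha.
  pose proof (sq_ratio_bounds a w1 Ha). pose proof (sq_ratio_bounds a w2 Ha).
  apply Rabs_le. split; nra.
Qed.

Lemma gstar_tail nu a w : /2 <= nu -> 0 < Cnu nu -> 1 <= w ^ 2 ->
  gstar nu a w <= Cnu nu * Rpower a (2 * nu) / w ^ 2.
Proof.
  intros Hnu Hc Hw. unfold gstar, Rdiv.
  apply Rmult_le_compat_l; [apply Rmult_le_pos; [lra | left; apply Rpower_pos]|].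
  replace (/ w ^ 2) with (exp (- ln (w ^ 2))) by (rewrite exp_Ropp, exp_ln; lra).
  unfold Rpower. apply exp_monotone.
  assert (0 <= ln (w ^ 2)) by (rewrite <- ln_1; apply ln_le; lra).
  assert (ln (w ^ 2) <= ln (a ^ 2 + w ^ 2)) by (apply ln_le; nra).
  nra.
Qed.

Lemma gstar_lower nu a w M : 0 <= nu -> 0 < Cnu nu -> 0 < a -> a ^ 2 + w ^ 2 <= M ->
  Cnu nu * Rpower a (2 * nu) * Rpower M (- (nu + /2)) <= gstar nu a w.
Proof.
  intros Hnu Hc Ha HM. unfold gstar.
  apply Rmult_le_compat_l; [apply Rmult_le_pos; [lra | left; apply Rpower_pos]|].
  unfold Rpower. apply exp_monotone.
  assert (ln (a ^ 2 + w ^ 2) <= ln M) by (apply ln_le; nra).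
  nra.
Qed.

(** * The periodized density g^delta *)

Definition alias_freq (lam : R) (k : Z) : R := lam + 2 * IZR k * PI.
Definition alias (nu a lam : R) (k : Z) : R := gstar nu a (alias_freq lam k).

Lemma alias_freq_0 lam : alias_freq lam 0 = lam.
Proof. unfold alias_freq. simpl. ring. Qed.

(* For |lambda| <= pi and k <> 0, |lambda + 2 k pi| >= 2 |k|, hence the
   squared alias frequency dominates 2 |k| (|k| + 1). *)
Lemma alias_freq_sq_ge lam k : - PI <= lam <= PI -> k <> 0%Z ->
  2 * Rabs (IZR k) * (Rabs (IZR k) + 1) <= alias_freq lam k ^ 2.
Proof.
  intros Hlam Hk. set (J := Rabs (IZR k)).
  assert (HJ : 1 <= J).
  { unfold J. rewrite <- abs_IZR. apply IZR_le. lia. }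
  assert (Hpi : 2 < PI) by (pose proof PI2_1; lra).
  assert (Hfar : 2 * J <= Rabs (alias_freq lam k)).
  { unfold alias_freq. pose proof (Rabs_triang_inv (2 * IZR k * PI) (- lam)).
    replace (2 * IZR k * PI - - lam) with (lam + 2 * IZR k * PI) in H by ring.
    rewrite Rabs_Ropp, !Rabs_mult, (Rabs_right 2), (Rabs_right PI) in H by lra.
    assert (Rabs lam <= PI) by (apply Rabs_le; lra). fold J in H. nra. }
  rewrite <- pow2_abs. nra.
Qed.

Lemma alias_term_bound nu a lam k : /2 <= nu -> 0 < Cnu nu -> - PI <= lam <= PI -> k <> 0%Z ->
  alias nu a lam k <= Cnu nu * Rpower a (2 * nu) / (2 * Rabs (IZR k) * (Rabs (IZR k) + 1)).
Proof.
  intros Hnu Hc Hlam Hk. pose proof (alias_freq_sq_ge lam k Hlam Hk) as Hsq.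
  assert (HJ : 1 <= Rabs (IZR k)) by (rewrite <- abs_IZR; apply IZR_le; lia).
  unfold alias. eapply Rle_trans; [apply gstar_tail; [exact Hnu | exact Hc | nra]|].
  unfold Rdiv. apply Rmult_le_compat_l; [apply Rmult_le_pos; [lra | left; apply Rpower_pos]|].
  apply Rinv_le_contravar; nra.
Qed.

Definition pair_sum (G : Z -> R) (j : nat) : R :=
  match j with
  | O => G 0%Z
  | S m => G (Z.of_nat (S m)) + G (- Z.of_nat (S m))%Z
  end.

Lemma sym_sum_pair (G : Z -> R) N :
  sum_f_R0 (fun i => G (Z.of_nat i - Z.of_nat N)%Z) (2 * N) = sum_f_R0 (pair_sum G) N.
Proof.
  induction N as [|N IH]; [reflexivity|].
  replace (2 * S N)%nat with (S (S (2 * N))) by lia.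
  rewrite decomp_sum by lia. change (Init.Nat.pred (S (S (2 * N)))) with (S (2 * N)).
  rewrite !tech5, <- IH.
  replace (sum_f_R0 (fun i => G (Z.of_nat (S i) - Z.of_nat (S N))%Z) (2 * N))
    with (sum_f_R0 (fun i => G (Z.of_nat i - Z.of_nat N)%Z) (2 * N))
    by (apply sum_eq; intros; f_equal; lia).
  replace (Z.of_nat 0 - Z.of_nat (S N))%Z with (- Z.of_nat (S N))%Z by lia.
  replace (Z.of_nat (S (S (2 * N))) - Z.of_nat (S N))%Z with (Z.of_nat (S N)) by lia.
  change (pair_sum G (S N)) with (G (Z.of_nat (S N)) + G (- Z.of_nat (S N))%Z). ring.
Qed.

Lemma pair_sum_abs_le (G H : Z -> R) c j :
  (forall k, Rabs (G k) <= c * H k) -> Rabs (pair_sum G j) <= c * pair_sum H j.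
Proof.
  intros HG. destruct j as [|m]; cbn [pair_sum]; [apply HG|].
  eapply Rle_trans; [apply Rabs_triang|].
  pose proof (HG (Z.of_nat (S m))). pose proof (HG (- Z.of_nat (S m))%Z). lra.
Qed.

Lemma alias_pair_bound nu a lam j : /2 <= nu -> 0 < Cnu nu -> - PI <= lam <= PI -> (1 <= j)%nat ->
  Rabs (pair_sum (alias nu a lam) j) <= Cnu nu * Rpower a (2 * nu) * tel_weight j.
Proof.
  intros Hnu Hc Hlam Hj. destruct j as [|m]; [lia|]. cbn [pair_sum].
  assert (Habs1 : Rabs (IZR (Z.of_nat (S m))) = INR (S m))
    by (rewrite <- INR_IZR_INZ; apply Rabs_right, Rle_ge, pos_INR).
  assert (Habs2 : Rabs (IZR (- Z.of_nat (S m))) = INR (S m))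
    by (rewrite opp_IZR, Rabs_Ropp; exact Habs1).
  pose proof (alias_term_bound nu a lam (Z.of_nat (S m)) Hnu Hc Hlam ltac:(lia)) as H1.
  pose proof (alias_term_bound nu a lam (- Z.of_nat (S m)) Hnu Hc Hlam ltac:(lia)) as H2.
  rewrite Habs1 in H1. rewrite Habs2 in H2.
  pose proof (gstar_pos nu a (alias_freq lam (Z.of_nat (S m))) Hc).
  pose proof (gstar_pos nu a (alias_freq lam (- Z.of_nat (S m))) Hc).
  unfold alias in *. rewrite Rabs_right by lra.
  replace (Cnu nu * Rpower a (2 * nu) * tel_weight (S m))
    with (2 * (Cnu nu * Rpower a (2 * nu) / (2 * INR (S m) * (INR (S m) + 1)))).
  - lra.
  - unfold tel_weight. rewrite (S_INR (S m)).
    assert (0 < INR (S m)) by (apply lt_0_INR; lia). field. lra.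
Qed.

Lemma gdelta_partial_pairs nu d t lam N :
  gdelta_partial nu d t lam N = sum_f_R0 (pair_sum (alias nu (d * t) lam)) N.
Proof. exact (sym_sum_pair (alias nu (d * t) lam) N). Qed.

Lemma gdelta_cv nu d t lam : /2 <= nu -> 0 < Cnu nu -> - PI <= lam <= PI ->
  Un_cv (fun N => sum_f_R0 (pair_sum (alias nu (d * t) lam)) N) (gdelta nu d t lam).
Proof.
  intros Hnu Hc Hlam.
  destruct (dominated_series_cv (pair_sum (alias nu (d * t) lam))
              (Cnu nu * Rpower (d * t) (2 * nu))) as [l Hl].
  { apply Rmult_le_pos; [lra | left; apply Rpower_pos]. }
  { intros j Hj. now apply alias_pair_bound. }
  assert (Hpartial : Un_cv (gdelta_partial nu d t lam) l).
  { intros eps Heps. destruct (Hl eps Heps) as [N HN]. exists N. intros n Hn.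
    rewrite gdelta_partial_pairs. now apply HN. }
  replace (gdelta nu d t lam) with l; [exact Hl|].
  apply (UL_sequence (gdelta_partial nu d t lam)); [exact Hpartial|].
  unfold gdelta. apply epsilon_spec. exists l. exact Hpartial.
Qed.

Lemma gdelta_bounds nu d t lam : /2 <= nu -> 0 < Cnu nu -> - PI <= lam <= PI ->
  gstar nu (d * t) lam <= gdelta nu d t lam <=
  gstar nu (d * t) lam + Cnu nu * Rpower (d * t) (2 * nu).
Proof.
  intros Hnu Hc Hlam. apply (limit_between _ _ _ _ (gdelta_cv nu d t lam Hnu Hc Hlam)).
  intro n. set (u := pair_sum (alias nu (d * t) lam)).
  assert (Hu0 : u 0%nat = gstar nu (d * t) lam)
    by (unfold u, alias; cbn [pair_sum]; now rewrite alias_freq_0).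
  split.
  - rewrite <- Hu0. induction n as [|n IH]; [simpl; lra|].
    rewrite tech5. assert (0 <= u (S n)).
    { unfold u, alias. cbn [pair_sum].
      pose proof (gstar_pos nu (d * t) (alias_freq lam (Z.of_nat (S n))) Hc).
      pose proof (gstar_pos nu (d * t) (alias_freq lam (- Z.of_nat (S n))) Hc). lra. }
    lra.
  - rewrite <- Hu0.
    assert (H := partial_sum_head u (Cnu nu * Rpower (d * t) (2 * nu))
                   ltac:(apply Rmult_le_pos; [lra | left; apply Rpower_pos])
                   ltac:(intros j Hj; now apply alias_pair_bound) n).
    apply Rabs_le_between in H. lra.
Qed.

(** * The derivative of g^delta in theta *)

Definition alias_deriv (nu d lam t : R) (k : Z) : R :=
  alias nu (d * t) lam k * (d * score nu (d * t) (alias_freq lam k)).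

Lemma pair_sum_deriv nu d lam t j : 0 < Cnu nu -> 0 < d -> 0 < t ->
  derivable_pt_lim (fun y => pair_sum (alias nu (d * y) lam) j) t
    (pair_sum (alias_deriv nu d lam t) j).
Proof.
  intros Hc Hd Ht. unfold alias_deriv, alias.
  destruct j as [|m]; cbn [pair_sum].
  - now apply gstar_scaled_deriv.
  - apply (derivable_pt_lim_plus (fun y => gstar nu (d * y) (alias_freq lam (Z.of_nat (S m))))
                                 (fun y => gstar nu (d * y) (alias_freq lam (- Z.of_nat (S m)))));
      now apply gstar_scaled_deriv.
Qed.

Lemma sum_deriv (h : nat -> R -> R) (h' : nat -> R) x n :
  (forall k, derivable_pt_lim (h k) x (h' k)) ->
  derivable_pt_lim (fun y => sum_f_R0 (fun k => h k y) n) x (sum_f_R0 h' n).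
Proof.
  intros H. induction n as [|n IH]; [apply H|].
  apply (derivable_pt_lim_plus (fun y => sum_f_R0 (fun k => h k y) n) (h (S n))); auto.
Qed.

(* Since |a h*_{nu,a}| <= 4 nu + 1, the derivative terms are dominated like the
   terms of g^delta, with an extra factor (4 nu + 1)/theta. *)
Lemma alias_deriv_pair_bound nu d lam y j : /2 <= nu -> 0 < Cnu nu -> - PI <= lam <= PI ->
  0 < d -> 0 < y -> (1 <= j)%nat ->
  Rabs (pair_sum (alias_deriv nu d lam y) j)
    <= (4 * nu + 1) / y * (Cnu nu * Rpower (d * y) (2 * nu)) * tel_weight j.
Proof.
  intros Hnu Hc Hlam Hd Hy Hj.
  eapply Rle_trans.
  - apply (pair_sum_abs_le _ (alias nu (d * y) lam) ((4 * nu + 1) / y)).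
    intro k. unfold alias_deriv. pose proof (gstar_pos nu (d * y) (alias_freq lam k) Hc).
    rewrite Rabs_mult, (Rabs_right (alias _ _ _ _)) by (unfold alias; lra).
    rewrite Rmult_comm. apply Rmult_le_compat_r; [unfold alias; lra|].
    replace (d * score nu (d * y) (alias_freq lam k))
      with (/ y * (d * y * score nu (d * y) (alias_freq lam k))) by (field; lra).
    rewrite Rabs_mult, Rabs_right by (apply Rle_ge, Rlt_le, Rinv_0_lt_compat, Hy).
    unfold Rdiv. rewrite Rmult_comm. apply Rmult_le_compat_r; [apply Rlt_le, Rinv_0_lt_compat, Hy|].
    apply scaled_score_abs; nra.
  - rewrite Rmult_assoc. apply Rmult_le_compat_l; [apply Rlt_le, Rdiv_lt_0_compat; lra|].
    eapply Rle_trans; [apply Rle_abs | now apply alias_pair_bound].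
Qed.

(* Term-by-term differentiation of g^delta: on the ball |y - theta| < theta/2 the
   derivative series is uniformly dominated by a telescoping series. *)
Lemma gdelta_deriv nu d t lam : /2 <= nu -> 0 < Cnu nu -> - PI <= lam <= PI -> 0 < d -> 0 < t ->
  exists g', derivable_pt_lim (fun y => gdelta nu d y lam) t g' /\
    Un_cv (fun N => sum_f_R0 (pair_sum (alias_deriv nu d lam t)) N) g'.
Proof.
  intros Hnu Hc Hlam Hd Ht.
  set (r := mkposreal (t / 2) ltac:(lra)).
  assert (Hball : forall y, Boule t r y -> t / 2 < y < 3 * t / 2).
  { intros y Hy. unfold Boule in Hy. simpl in Hy. apply Rabs_def2 in Hy. lra. }
  assert (Hcenter : Boule t r t).
  { unfold Boule. rewrite Rminus_diag, Rabs_R0. simpl. lra. }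
  set (K' := (4 * nu + 1) * (2 / t) * (Cnu nu * Rpower (d * (2 * t)) (2 * nu))).
  assert (HK' : 0 <= K').
  { unfold K'. pose proof (Rpower_pos (d * (2 * t)) (2 * nu)).
    assert (0 < 2 / t) by (apply Rdiv_lt_0_compat; lra).
    apply Rmult_le_pos; apply Rmult_le_pos; lra. }
  assert (Hdom : forall j y, (1 <= j)%nat -> Boule t r y ->
            Rabs (pair_sum (alias_deriv nu d lam y) j) <= K' * tel_weight j).
  { intros j y Hj Hy. destruct (Hball y Hy) as [Hy1 Hy2].
    eapply Rle_trans; [apply alias_deriv_pair_bound; auto; lra|].
    apply Rmult_le_compat_r; [left; now apply tel_weight_pos|].
    unfold K'. apply Rmult_le_compat.
    - apply Rlt_le, Rdiv_lt_0_compat; lra.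
    - apply Rmult_le_pos; [lra | left; apply Rpower_pos].
    - unfold Rdiv. apply Rmult_le_compat_l; [lra|].
      replace (2 * / t) with (/ (t / 2)) by (field; lra). apply Rinv_le_contravar; lra.
    - apply Rmult_le_compat_l; [lra|]. apply Rle_Rpower_l; [lra|]. split; nra. }
  set (g' y := series_sum (pair_sum (alias_deriv nu d lam y))).
  assert (Hcv' : forall y, Boule t r y ->
            Un_cv (fun N => sum_f_R0 (pair_sum (alias_deriv nu d lam y)) N) (g' y)).
  { intros y Hy. apply series_sum_spec, (dominated_series_cv _ K' HK').
    intros j Hj. now apply Hdom. }
  exists (g' t). split; [|exact (Hcv' t Hcenter)].
  apply (CVU_derivable (fun N y => sum_f_R0 (fun j => pair_sum (alias nu (d * y) lam) j) N)
                       (fun N y => sum_f_R0 (fun j => pair_sum (alias_deriv nu d lam y) j) N)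
                       (fun y => gdelta nu d y lam) g' t r).
  - apply (dominated_series_cvu _ g' t r K' HK' Hdom Hcv').
  - intros y _. now apply gdelta_cv.
  - intros n y Hy. destruct (Hball y Hy).
    apply (sum_deriv (fun j y => pair_sum (alias nu (d * y) lam) j)).
    intro j. apply pair_sum_deriv; lra.
  - exact Hcenter.
Qed.

(** * The estimate on h^delta *)

(* Subtracting q0 g^delta, where q0 = delta h*_{nu,delta theta}(lambda) is the
   log-derivative of the central term, leaves the residual series below. *)
Definition residual_term (nu d lam t : R) (k : Z) : R :=
  alias_deriv nu d lam t k - d * score nu (d * t) lam * alias nu (d * t) lam k.

Lemma residual_sum nu d lam t N :
  sum_f_R0 (pair_sum (residual_term nu d lam t)) N =
  sum_f_R0 (pair_sum (alias_deriv nu d lam t)) N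
  - d * score nu (d * t) lam * sum_f_R0 (pair_sum (alias nu (d * t) lam)) N.
Proof.
  induction N as [|N IH].
  - simpl. unfold residual_term. ring.
  - rewrite !tech5, IH. unfold residual_term. cbn [pair_sum]. ring.
Qed.

(* The residual vanishes on the central term ... *)
Lemma residual_pair_0 nu d lam t : pair_sum (residual_term nu d lam t) 0 = 0.
Proof.
  cbn [pair_sum]. unfold residual_term, alias_deriv. rewrite alias_freq_0. ring.
Qed.

(* ... and the others are dominated like g^delta, with the factor (2 nu + 1)/theta
   coming from |a (h*_{nu,a}(w) - h*_{nu,a}(lambda))| <= 2 nu + 1. *)
Lemma residual_pair_bound nu d lam t j : /2 <= nu -> 0 < Cnu nu -> - PI <= lam <= PI ->
  0 < d -> 0 < t -> (1 <= j)%nat ->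
  Rabs (pair_sum (residual_term nu d lam t) j)
    <= (2 * nu + 1) / t * (Cnu nu * Rpower (d * t) (2 * nu)) * tel_weight j.
Proof.
  intros Hnu Hc Hlam Hd Ht Hj.
  eapply Rle_trans.
  - apply (pair_sum_abs_le _ (alias nu (d * t) lam) ((2 * nu + 1) / t)).
    intro k. unfold residual_term, alias_deriv. pose proof (gstar_pos nu (d * t) (alias_freq lam k) Hc).
    replace (alias nu (d * t) lam k * (d * score nu (d * t) (alias_freq lam k))
             - d * score nu (d * t) lam * alias nu (d * t) lam k)
      with (alias nu (d * t) lam k
            * (/ t * (d * t * (score nu (d * t) (alias_freq lam k) - score nu (d * t) lam))))
      by (field; lra).
    rewrite Rabs_mult, Rabs_mult, (Rabs_right (alias _ _ _ _)), (Rabs_right (/ t))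
      by (try apply Rle_ge, Rlt_le, Rinv_0_lt_compat; unfold alias; lra).
    rewrite Rmult_comm. apply Rmult_le_compat_r; [unfold alias; lra|].
    unfold Rdiv. rewrite Rmult_comm. apply Rmult_le_compat_r; [apply Rlt_le, Rinv_0_lt_compat, Ht|].
    apply scaled_score_diff; nra.
  - rewrite Rmult_assoc. apply Rmult_le_compat_l; [apply Rlt_le, Rdiv_lt_0_compat; lra|].
    eapply Rle_trans; [apply Rle_abs | now apply alias_pair_bound].
Qed.

Lemma hdelta_estimate nu d t lam : /2 <= nu -> 0 < Cnu nu -> - PI <= lam <= PI -> 0 < d -> 0 < t ->
  gstar nu (d * t) lam * Rabs (hdelta nu d t lam - d * hstar nu (d * t) lam)
    <= (2 * nu + 1) / t * (Cnu nu * Rpower (d * t) (2 * nu)).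
Proof.
  intros Hnu Hc Hlam Hd Ht.
  destruct (gdelta_bounds nu d t lam Hnu Hc Hlam) as [Hlo _].
  destruct (gdelta_deriv nu d t lam Hnu Hc Hlam Hd Ht) as [g' [Hder Hcv']].
  set (G := gdelta nu d t lam) in *. set (F0 := gstar nu (d * t) lam) in *.
  set (q0 := d * score nu (d * t) lam).
  set (B := (2 * nu + 1) / t * (Cnu nu * Rpower (d * t) (2 * nu))).
  assert (HF0 : 0 < F0) by now apply gstar_pos.
  assert (HB : 0 <= B).
  { unfold B. apply Rmult_le_pos; [apply Rlt_le, Rdiv_lt_0_compat; lra|].
    apply Rmult_le_pos; [lra | left; apply Rpower_pos]. }
  assert (Hh : hdelta nu d t lam = g' / G)
    by exact (log_derivative_value (fun y => gdelta nu d y lam) t g' ltac:(unfold G in *; lra) Hder).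
  assert (Hq : d * hstar nu (d * t) lam = q0)
    by (unfold q0; rewrite hstar_eq_score; [reflexivity | exact Hc | nra]).
  assert (Hres : Rabs (g' - q0 * G) <= B).
  { apply (limit_abs_le (fun N => sum_f_R0 (pair_sum (residual_term nu d lam t)) N)).
    - apply (Un_cv_ext (fun N => sum_f_R0 (pair_sum (alias_deriv nu d lam t)) N
                                 - q0 * sum_f_R0 (pair_sum (alias nu (d * t) lam)) N));
        [intro N; symmetry; apply residual_sum|].
      apply CV_minus; [exact Hcv'|]. apply CV_mult; [apply cv_const | now apply gdelta_cv].
    - intro N. rewrite <- (Rminus_0_r (sum_f_R0 _ N)), <- (residual_pair_0 nu d lam t).
      apply partial_sum_head; [exact HB|]. intros j Hj. now apply residual_pair_bound. }
  rewrite Hh, Hq.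
  replace (g' / G - q0) with (/ G * (g' - q0 * G)) by (field; lra).
  rewrite Rabs_mult, Rabs_right by (apply Rle_ge, Rlt_le, Rinv_0_lt_compat; lra).
  rewrite <- Rmult_assoc. apply Rle_trans with (1 * Rabs (g' - q0 * G)); [|lra].
  apply Rmult_le_compat_r; [apply Rabs_pos|].
  apply (Rmult_le_reg_r G); [lra|]. rewrite Rmult_assoc, Rinv_l by lra. lra.
Qed.

(** * Uniformity in delta and theta *)

Lemma scaled_power_upper nu thu d t : 0 <= nu -> 0 < Cnu nu -> 0 < d -> 0 < t -> t <= thu ->
  Cnu nu * Rpower (d * t) (2 * nu) <= Cnu nu * Rpower thu (2 * nu) * Rpower d (2 * nu).
Proof.
  intros Hnu Hc Hd Ht Htu. rewrite <- Rpower_mult_distr by lra.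
  rewrite (Rmult_comm (Rpower d _)), Rmult_assoc.
  apply Rmult_le_compat_l; [lra|]. apply Rmult_le_compat_r; [left; apply Rpower_pos|].
  apply Rle_Rpower_l; lra.
Qed.

Lemma gstar_uniform_lower nu thl thu d t lam : 0 <= nu -> 0 < Cnu nu -> 0 < thl ->
  0 < d -> d <= 1 -> thl <= t -> t <= thu -> - PI <= lam <= PI ->
  Cnu nu * Rpower thl (2 * nu) * Rpower (thu ^ 2 + PI ^ 2) (- (nu + /2)) * Rpower d (2 * nu)
    <= gstar nu (d * t) lam.
Proof.
  intros Hnu Hc Hthl Hd Hd1 Ht1 Ht2 Hlam.
  assert (Hdt : d * t <= thu) by nra.
  eapply Rle_trans; [|apply gstar_lower; [exact Hnu | exact Hc | nra |]].
  - rewrite <- Rpower_mult_distr by lra.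
    replace (Cnu nu * Rpower thl (2 * nu) * Rpower (thu ^ 2 + PI ^ 2) (- (nu + / 2)) * Rpower d (2 * nu))
      with (Cnu nu * (Rpower d (2 * nu) * Rpower thl (2 * nu)) * Rpower (thu ^ 2 + PI ^ 2) (- (nu + / 2)))
      by ring.
    apply Rmult_le_compat_r; [left; apply Rpower_pos|]. apply Rmult_le_compat_l; [lra|].
    apply Rmult_le_compat_l; [left; apply Rpower_pos|]. apply Rle_Rpower_l; lra.
  - assert ((d * t) ^ 2 <= thu ^ 2) by (apply pow_incr; split; nra).
    assert (lam ^ 2 <= PI ^ 2) by (destruct Hlam; nra). lra.
Qed.

Theorem lemma5p1 (nu thl thu : R) (Hnu : /2 <= nu)
  (Hthl : 0 < thl) (Hth : thl <= thu) :
  exists C : R, 0 < C /\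
    forall delta theta lambda : R,
      0 < delta -> delta <= 1 ->
      thl <= theta -> theta <= thu ->
      - PI <= lambda -> lambda <= PI ->
      / C * Rpower delta (2 * nu) <= gstar nu (delta * theta) lambda /\
      gstar nu (delta * theta) lambda <= gdelta nu delta theta lambda /\
      gdelta nu delta theta lambda
        <= gstar nu (delta * theta) lambda + C * Rpower delta (2 * nu) /\
      gstar nu (delta * theta) lambda
        * Rabs (hdelta nu delta theta lambda - delta * hstar nu (delta * theta) lambda)
        <= C * Rpower delta (2 * nu).
Proof.
  assert (Hc : 0 < Cnu nu) by (apply Cnu_pos; lra).
  set (L := Cnu nu * Rpower thl (2 * nu) * Rpower (thu ^ 2 + PI ^ 2) (- (nu + /2))).
  set (B := Cnu nu * Rpower thu (2 * nu)).
  set (q := (2 * nu + 1) / thl).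
  assert (HL : 0 < L) by (apply Rmult_lt_0_compat; [apply Rmult_lt_0_compat|]; auto using Rpower_pos).
  assert (HB : 0 < B) by (apply Rmult_lt_0_compat; auto using Rpower_pos).
  assert (Hq : 0 < q) by (apply Rdiv_lt_0_compat; lra).
  (* L delta^{2 nu} bounds g* from below and B delta^{2 nu} bounds C_nu (delta theta)^{2 nu}. *)
  exists (/ L + B * (1 + q)).
  assert (HiL : 0 < / L) by (apply Rinv_0_lt_compat, HL).
  split; [nra|]. intros d t lam Hd Hd1 Ht1 Ht2 Hl1 Hl2.
  assert (Hlam : - PI <= lam <= PI) by lra.
  pose proof (Rpower_pos d (2 * nu)) as Hdp.
  pose proof (gstar_uniform_lower nu thl thu d t lam ltac:(lra) Hc Hthl Hd Hd1 Ht1 Ht2 Hlam) as Hlow.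
  pose proof (scaled_power_upper nu thu d t ltac:(lra) Hc Hd ltac:(lra) Ht2) as Hup.
  destruct (gdelta_bounds nu d t lam Hnu Hc Hlam) as [Hg1 Hg2].
  pose proof (hdelta_estimate nu d t lam Hnu Hc Hlam Hd ltac:(lra)) as Hh.
  assert (Hinv : / (/ L + B * (1 + q)) <= L)
    by (rewrite <- (Rinv_inv L) at 2; apply Rinv_le_contravar; nra).
  assert (Hqt : (2 * nu + 1) / t <= q)
    by (unfold q, Rdiv; apply Rmult_le_compat_l; [lra | apply Rinv_le_contravar; lra]).
  fold L B in Hlow, Hup. split; [|split; [exact Hg1 | split]].
  - nra.
  - nra.
  - eapply Rle_trans; [exact Hh|].
    assert (0 <= (2 * nu + 1) / t) by (apply Rlt_le, Rdiv_lt_0_compat; lra).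
    assert (0 <= Cnu nu * Rpower (d * t) (2 * nu)) by (pose proof (Rpower_pos (d * t) (2 * nu)); nra).
    nra.
Qed.
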